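(* For any vector $|\psi\rangle\in\mathbb{C}^d$ and any positive semidefinite operators $P_1,P_2$ on $\mathbb{C}^d$, $$\langle\psi|P_1|\psi\rangle^2+\langle\psi|P_2|\psi\rangle^2\le\langle\psi|\sqrt{P_1^2+P_2^2}|\psi\rangle^2.$$ *)

From mathcomp Require Import all_boot all_order all_algebra.
Set Implicit Arguments. Unset Strict Implicit. Unset Printing Implicit Defensive.
Import Order.TTheory GRing.Theory Num.Theory.
Local Open Scope ring_scope.

(* Complex numbers: an arbitrary numClosedFieldType C (e.g. complex R for a
   realType R, or algC).  Vectors of C^d are column vectors 'cV[C]_d. *)

Definition adjmx (C : numClosedFieldType) m n (A : 'M[C]_(m, n)) : 'M[C]_(n, m) :=
  map_mx Num.conj (A^T).

Definition expect (C : numClosedFieldType) d (A : 'M[C]_d) (psi : 'cV[C]_d) : C :=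
  (adjmx psi *m A *m psi) 0 0.

Definition psdmx (C : numClosedFieldType) d (A : 'M[C]_d) : Prop :=
  adjmx A = A /\ forall v : 'cV[C]_d, 0 <= expect A v.

(* For A positive semidefinite this is the unique PSD square root. *)
Definition sqrtmx (C : numClosedFieldType) d (A : 'M[C]_d) : 'M[C]_d :=
  invmx (spectralmx A) *m diag_mx (map_mx sqrtC (spectral_diag A)) *m spectralmx A.

(* With a = <P1>, b = <P2> and r = sqrt (a^2 + b^2), the Hermitian matrices
   X = a P1 + b P2 and Y = b P1 - a P2 satisfy X^2 + Y^2 = r^2 (P1^2 + P2^2),
   so X^2 <= (r S)^2 for S = sqrt (P1^2 + P2^2).  For Hermitian X and
   positive semidefinite T, X^2 <= T^2 implies X <= T (operator monotonicity
   of the square root); hence a^2 + b^2 = <X> <= r <S>, that is r <= <S>. *)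

From mathcomp Require Import all_boot all_order all_algebra ring.
Import Order.TTheory GRing.Theory Num.Theory.
Set Implicit Arguments.
Unset Strict Implicit.
Unset Printing Implicit Defensive.
Local Open Scope ring_scope.

Section Adjoint.
Context {C : numClosedFieldType}.

Lemma adjmxE m n (A : 'M[C]_(m, n)) i j : adjmx A i j = (A j i)^*.
Proof. by rewrite !mxE. Qed.

Lemma adjmxK m n (A : 'M[C]_(m, n)) : adjmx (adjmx A) = A.
Proof. exact: trmxCK. Qed.

Lemma adjmxM m n p (A : 'M[C]_(m, n)) (B : 'M[C]_(n, p)) :
  adjmx (A *m B) = adjmx B *m adjmx A.
Proof. by rewrite /adjmx trmx_mul map_mxM. Qed.

Lemma adjmxD m n (A B : 'M[C]_(m, n)) : adjmx (A + B) = adjmx A + adjmx B.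
Proof. by rewrite /adjmx linearD map_mxD. Qed.

Lemma adjmxB m n (A B : 'M[C]_(m, n)) : adjmx (A - B) = adjmx A - adjmx B.
Proof. by rewrite /adjmx linearB map_mxB. Qed.

Lemma adjmxZ m n a (A : 'M[C]_(m, n)) : adjmx (a *: A) = a^* *: adjmx A.
Proof. by apply/matrixP => i j; rewrite !mxE rmorphM. Qed.

Lemma expectD d (A B : 'M[C]_d) v : expect (A + B) v = expect A v + expect B v.
Proof. by rewrite /expect mulmxDr mulmxDl mxE. Qed.

Lemma expectB d (A B : 'M[C]_d) v : expect (A - B) v = expect A v - expect B v.
Proof. by rewrite /expect mulmxBr mulmxBl !mxE. Qed.

Lemma expectZ d a (A : 'M[C]_d) v : expect (a *: A) v = a * expect A v.
Proof. by rewrite /expect -scalemxAr -scalemxAl mxE. Qed.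

Lemma expect_adjmx_mulmx m d (B : 'M[C]_(m, d)) v :
  expect (adjmx B *m B) v = \sum_i `|(B *m v) i 0| ^+ 2.
Proof.
rewrite /expect mulmxA -adjmxM -mulmxA mxE.
by apply: eq_bigr => i _; rewrite adjmxE normCKC.
Qed.

Lemma psdmx_sqr d (X : 'M[C]_d) : adjmx X = X -> psdmx (X *m X).
Proof.
move=> hermX; split; first by rewrite adjmxM hermX.
move=> v; rewrite -{1}hermX expect_adjmx_mulmx sumr_ge0 // => i _.
by rewrite exprn_ge0.
Qed.

Lemma psdmxD d (A B : 'M[C]_d) : psdmx A -> psdmx B -> psdmx (A + B).
Proof.
move=> [hermA A_ge0] [hermB B_ge0]; split; first by rewrite adjmxD hermA hermB.
by move=> v; rewrite expectD addr_ge0.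
Qed.

Lemma psdmxZ d a (A : 'M[C]_d) : 0 <= a -> psdmx A -> psdmx (a *: A).
Proof.
move=> a_ge0 [hermA A_ge0]; split; last by move=> v; rewrite expectZ mulr_ge0.
by rewrite adjmxZ hermA (CrealP (ger0_real a_ge0)).
Qed.

End Adjoint.

Section Spectral.
Context {C : numClosedFieldType}.

Lemma expect_diag_conj m n (U : 'M[C]_(m, n)) (r : 'rV[C]_m) v :
  expect (adjmx U *m diag_mx r *m U) v = \sum_i r 0 i * `|(U *m v) i 0| ^+ 2.
Proof.
rewrite /expect !mulmxA -adjmxM -mulmxA mxE.
by apply: eq_bigr => i _; rewrite mul_mx_diag !mxE normCKC; ring.
Qed.

Lemma psdmx_diag_conj m n (U : 'M[C]_(m, n)) (r : 'rV[C]_m) :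
  (forall i, 0 <= r 0 i) -> psdmx (adjmx U *m diag_mx r *m U).
Proof.
move=> r_ge0; split=> [|v].
  rewrite !adjmxM adjmxK mulmxA; congr (_ *m _ *m _).
  apply/matrixP => i j; rewrite !mxE rmorphMn eq_sym.
  case: eqVneq => [->|]; rewrite ?mulr0n // !mulr1n.
  exact/CrealP/ger0_real.
rewrite expect_diag_conj sumr_ge0 // => i _.
by rewrite mulr_ge0 ?exprn_ge0.
Qed.

Lemma mulmx_diag_conj m n (U : 'M[C]_(m, n)) (r s : 'rV[C]_m) :
  U *m adjmx U = 1%:M ->
  (adjmx U *m diag_mx r *m U) *m (adjmx U *m diag_mx s *m U) =
  adjmx U *m diag_mx (\row_j (r 0 j * s 0 j)) *m U.
Proof.
move=> unitU; rewrite -!mulmxA (mulmxA U) unitU mul1mx.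
by rewrite (mulmxA (diag_mx r)) mulmx_diag mulmxA.
Qed.

Lemma unitary_col_adjmx n (U : 'M[C]_n) i :
  U *m adjmx U = 1%:M -> adjmx (col i (adjmx U)) *m col i (adjmx U) = 1%:M.
Proof.
move=> unitU; rewrite colE adjmxM adjmxK /adjmx trmx_delta map_delta_mx.
rewrite mulmxA -(mulmxA _ U) unitU mulmx1 mul_delta_mx.
by apply/matrixP => a b; rewrite !ord1 !mxE.
Qed.

Lemma spectralmx_unitary n (A : 'M[C]_n) :
  spectralmx A *m adjmx (spectralmx A) = 1%:M.
Proof. exact/unitarymxP/spectral_unitarymx. Qed.

Section Eigenvector.
Variables (d : nat) (A : 'M[C]_d) (w : 'cV[C]_d) (l : C).
Hypothesis eigen_w : A *m w = l *: w.

Lemma expect_eigen : adjmx w *m w = 1%:M -> expect A w = l.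
Proof.
by move=> unit_w; rewrite /expect -mulmxA eigen_w -scalemxAr unit_w !mxE eqxx mulr1.
Qed.

Lemma expect_mulmx_eigenr (B : 'M[C]_d) : expect (B *m A) w = l * expect B w.
Proof. by rewrite /expect -!mulmxA eigen_w -!scalemxAr mxE !mulmxA. Qed.

Lemma expect_mulmx_eigenl (B : 'M[C]_d) :
  adjmx A = A -> l \is Num.real -> expect (A *m B) w = l * expect B w.
Proof.
move=> hermA /CrealP real_l.
have wA : adjmx w *m A = l *: adjmx w.
  by rewrite -hermA -adjmxM eigen_w adjmxZ real_l.
by rewrite /expect mulmxA wA -!scalemxAl mxE.
Qed.

End Eigenvector.

Section Normal.
Variables (n : nat) (A : 'M[C]_n).
Local Notation U := (spectralmx A).
Local Notation e := (spectral_diag A).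

Lemma normal_spectral : A \is normalmx -> A = adjmx U *m diag_mx e *m U.
Proof. by move/orthomx_spectralP; rewrite invmx_unitary // spectral_unitarymx. Qed.

Lemma normal_spectral_eigen i :
  A \is normalmx -> A *m col i (adjmx U) = e 0 i *: col i (adjmx U).
Proof.
move/normal_spectral => {1}->; rewrite colE -!mulmxA (mulmxA U).
rewrite spectralmx_unitary mul1mx scalemxAr; congr (_ *m _).
apply/matrixP => a b; rewrite mul_diag_mx !mxE.
by case: eqVneq => [->|]; rewrite ?mulr1 ?mulr0 ?andbF.
Qed.

End Normal.

Lemma selfadjoint_hermsymmx n (A : 'M[C]_n) : adjmx A = A -> A \is hermsymmx.
Proof.
by move=> hermA; apply/is_hermitianmxP; rewrite expr0 scale1r; exact: esym hermA.
Qed.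

Lemma selfadjoint_normalmx n (A : 'M[C]_n) : adjmx A = A -> A \is normalmx.
Proof. by move/selfadjoint_hermsymmx/hermitian_normalmx. Qed.

Lemma psdmxP n (A : 'M[C]_n) :
  adjmx A = A -> psdmx A <-> forall i, 0 <= spectral_diag A 0 i.
Proof.
move/selfadjoint_normalmx => normalA.
split=> [[_ A_ge0] i|e_ge0].
  rewrite -(expect_eigen (normal_spectral_eigen i normalA)) //.
  exact/unitary_col_adjmx/spectralmx_unitary.
by rewrite (normal_spectral normalA); apply: psdmx_diag_conj.
Qed.

End Spectral.

Section SquareRoot.
Context {C : numClosedFieldType} {n : nat} (Q : 'M[C]_n).
Hypothesis psdQ : psdmx Q.

Lemma sqrtmxE : sqrtmx Q =
  adjmx (spectralmx Q) *m diag_mx (map_mx sqrtC (spectral_diag Q)) *m spectralmx Q.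
Proof. by rewrite /sqrtmx invmx_unitary // spectral_unitarymx. Qed.

Lemma psdmx_sqrtmx : psdmx (sqrtmx Q).
Proof.
have [hermQ _] := psdQ; have /(psdmxP hermQ) Q_ge0 := psdQ.
by rewrite sqrtmxE; apply: psdmx_diag_conj => i; rewrite mxE sqrtC_ge0.
Qed.

Lemma sqrtmxK : sqrtmx Q *m sqrtmx Q = Q.
Proof.
have [hermQ _] := psdQ.
rewrite sqrtmxE mulmx_diag_conj ?spectralmx_unitary //.
rewrite [RHS](normal_spectral (selfadjoint_normalmx hermQ)).
congr (_ *m diag_mx _ *m _).
by apply/rowP => j; rewrite !mxE -expr2 sqrtCK.
Qed.

End SquareRoot.

Lemma ge0_of_mul_twice_sub_ge0 (R : numDomainType) (l s : R) :
  l \is Num.real -> 0 <= s -> 0 <= l * (s + s - l) -> 0 <= l.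
Proof.
move=> real_l s_ge0; apply: contraTT; rewrite -real_ltNge ?real0 // => l_lt0.
by rewrite nmulr_rge0 // lt_geF // ltr_wpDl ?addr_ge0 ?oppr_gt0.
Qed.

Lemma expect_le_of_sqr_le {C : numClosedFieldType} d (X S : 'M[C]_d) :
  adjmx X = X -> psdmx S ->
  (forall v, expect (X *m X) v <= expect (S *m S) v) ->
  forall v, expect X v <= expect S v.
Proof.
move=> hermX [hermS S_ge0] le_sqr.
pose D := S - X.
have hermD : adjmx D = D by rewrite adjmxB hermS hermX.
suff [_ D_ge0] : psdmx D by move=> v; rewrite -subr_ge0 -expectB.
apply/(psdmxP hermD) => i.
(* For a unit eigenvector w of D = S - X with eigenvalue l, expanding X = S - D
   gives <S^2>_w - <X^2>_w = l (2 <S>_w - l); with <S>_w >= 0 this forces l >= 0. *)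
set l := spectral_diag D 0 i; set w := col i (adjmx (spectralmx D)).
have eigen_w : D *m w = l *: w.
  exact: normal_spectral_eigen (selfadjoint_normalmx hermD).
have unit_w : adjmx w *m w = 1%:M by apply/unitary_col_adjmx/spectralmx_unitary.
have real_l : l \is Num.real.
  exact/mxOverP/hermitian_spectral_diag_real/selfadjoint_hermsymmx.
apply: (ge0_of_mul_twice_sub_ge0 real_l (S_ge0 w)).
have eX : X = S - D by rewrite opprB addrC subrK.
have := le_sqr w; rewrite -subr_ge0; clearbody D; rewrite eX.
rewrite !mulmxBl !mulmxBr !expectB (expect_mulmx_eigenr eigen_w).
rewrite !(expect_mulmx_eigenl eigen_w) // (expect_eigen eigen_w unit_w).
by congr (0 <= _); ring.
Qed.

Lemma rotation_sqr_sum (R : comPzRingType) n (a b : R) (A B : 'M[R]_n) :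
  (a *: A + b *: B) *m (a *: A + b *: B) + (b *: A - a *: B) *m (b *: A - a *: B)
  = (a ^+ 2 + b ^+ 2) *: (A *m A + B *m B).
Proof.
rewrite !mulmxDl !mulmxDr !mulNmx !mulmxN -!scalemxAl -!scalemxAr !scalerA.
move: (A *m A) (A *m B) (B *m A) (B *m B) => AA AB BA BB.
by apply/matrixP => i j; rewrite !mxE; ring.
Qed.

Lemma sqr_le_sqr_of_le_mul (R : numDomainType) (r c : R) :
  0 <= r -> 0 <= c -> r ^+ 2 <= r * c -> r ^+ 2 <= c ^+ 2.
Proof.
rewrite le0r => /predU1P[-> c_ge0 _|r_gt0 c_ge0].
  by rewrite expr2 mul0r exprn_ge0.
rewrite !expr2 ler_pM2l // => le_rc.
by apply: ler_pM => //; exact: ltW.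
Qed.

Theorem mainTheorem5 (C : numClosedFieldType) (d : nat) (psi : 'cV[C]_d)
  (P1 P2 : 'M[C]_d) :
  psdmx P1 -> psdmx P2 ->
  expect P1 psi ^+ 2 + expect P2 psi ^+ 2
    <= expect (sqrtmx (P1 *m P1 + P2 *m P2)) psi ^+ 2.
Proof.
move=> psd1 psd2; have [herm1 P1_ge0] := psd1; have [herm2 P2_ge0] := psd2.
set a := expect P1 psi; set b := expect P2 psi.
have a_ge0 : 0 <= a := P1_ge0 psi; have b_ge0 : 0 <= b := P2_ge0 psi.
have psdQ : psdmx (P1 *m P1 + P2 *m P2) by apply: psdmxD; apply: psdmx_sqr.
set S := sqrtmx _; have sqrS : S *m S = _ := sqrtmxK psdQ.
have psdS : psdmx S := psdmx_sqrtmx psdQ.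
set r := sqrtC (a ^+ 2 + b ^+ 2); have sqr_r : r ^+ 2 = _ := sqrtCK _.
have r_ge0 : 0 <= r by rewrite sqrtC_ge0 addr_ge0 ?exprn_ge0.
have [hermX _] := psdmxD (psdmxZ a_ge0 psd1) (psdmxZ b_ge0 psd2).
have hermY : adjmx (b *: P1 - a *: P2) = b *: P1 - a *: P2.
  by rewrite adjmxB !adjmxZ herm1 herm2 !(CrealP (ger0_real _)).
have le_sqr v : expect ((a *: P1 + b *: P2) *m (a *: P1 + b *: P2)) v <=
                expect ((r *: S) *m (r *: S)) v.
  rewrite -scalemxAl -scalemxAr scalerA -expr2 sqr_r sqrS -rotation_sqr_sum.
  by rewrite expectD lerDl; case: (psdmx_sqr hermY).
have := expect_le_of_sqr_le hermX (psdmxZ r_ge0 psdS) le_sqr psi.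
rewrite expectD !expectZ -/a -/b -!expr2 -sqr_r.
by apply: sqr_le_sqr_of_le_mul => //; case: psdS.
Qed.
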